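(* Let $m,n,p,q,r,s$ be arbitrary integers. Let $$A(x_1,x_2,x_3,x_4)=\begin{bmatrix}x_1 & x_2 & x_3 & x_4\\ -nx_2 & x_1+mx_2 & -nx_4 & x_3+mx_4\\ -qx_3 & -qx_4 & x_1+px_3 & x_2+px_4\\ qnx_4 & -q(x_3+mx_4) & -nx_2-pnx_4 & x_1+mx_2+p(x_3+mx_4)\end{bmatrix}$$ and $$P(x_1,\dots,x_8)=\begin{bmatrix}A(x_1,\dots,x_4) & A(x_5,\dots,x_8)\\ -sA(x_5,\dots,x_8) & A(x_1,\dots,x_4)+rA(x_5,\dots,x_8)\end{bmatrix}.$$ Then for independent variables $x_i,y_i$, $P(x_1,\dots,x_8)P(y_1,\dots,y_8)=P(z_1,\dots,z_8)$, where $z_1,\dots,z_8$ are bilinear forms in the $x_i,y_i$ whose coefficients are integer polynomials in $m,n,p,q,r,s$; in particular $z_1=x_1y_1-nx_2y_2-qx_3y_3+qnx_4y_4-sx_5y_5+snx_6y_6+sqx_7y_7-sqnx_8y_8$. Consequently the octonary octic form $f=\det P$ satisfies $f(x_1,\dots,x_8)f(y_1,\dots,y_8)=f(z_1,\dots,z_8)$. *)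

From HB Require Import structures.
From mathcomp Require Import all_boot all_order all_algebra.
From mathcomp Require Import mpoly.
Set Implicit Arguments. Unset Strict Implicit. Unset Printing Implicit Defensive.
Import GRing.Theory.
Local Open Scope ring_scope.

Definition mx_of_rows (R : comRingType) (k : nat) (rows : seq (seq R)) : 'M[R]_k :=
  \matrix_(i < k, j < k) nth 0 (nth [::] rows i) j.

(* Index i : 'I_8 (variable x_{i+1} of the paper). *)
Definition ix (i : nat) : 'I_8 := inord i.

Definition Amx (R : comRingType) (m n p q x1 x2 x3 x4 : R) : 'M[R]_4 :=
  mx_of_rows 4
   [:: [:: x1; x2; x3; x4];
       [:: - (n * x2); x1 + m * x2; - (n * x4); x3 + m * x4];
       [:: - (q * x3); - (q * x4); x1 + p * x3; x2 + p * x4];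
       [:: q * n * x4; - (q * (x3 + m * x4)); - (n * x2) - p * n * x4;
           x1 + m * x2 + p * (x3 + m * x4)]].

Definition Pmx (R : comRingType) (m n p q r s : R) (x : 'I_8 -> R) : 'M[R]_(4 + 4) :=
  let A1 := Amx m n p q (x (ix 0)) (x (ix 1)) (x (ix 2)) (x (ix 3)) in
  let A2 := Amx m n p q (x (ix 4)) (x (ix 5)) (x (ix 6)) (x (ix 7)) in
  block_mx A1 A2 (- (s *: A2)) (A1 + r *: A2).

Definition fform (R : comRingType) (m n p q r s : R) (x : 'I_8 -> R) : R :=
  \det (Pmx m n p q r s x).

Definition params (m n p q r s : int) : 'I_6 -> int :=
  fun i => nth 0 [:: m; n; p; q; r; s] i.

Definition bilin (R : comRingType) (c : 'I_8 -> 'I_8 -> {mpoly int[6]})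
  (m n p q r s : int) (x y : 'I_8 -> R) : R :=
  \sum_(i < 8) \sum_(j < 8) ((c i j).@[params m n p q r s])%:~R * x i * y j.

From HB Require Import structures.
From mathcomp Require Import all_boot all_order all_algebra.
From mathcomp Require Import mpoly.
From mathcomp Require Import ring.
Set Implicit Arguments. Unset Strict Implicit.
Import GRing.Theory.
Local Open Scope ring_scope.

(* For square matrices U, V and scalars r, s let
     dblmx r s U V = [[U, V], [-sU, U + rV]],
   the matrix of multiplication by U + V w in the "doubled" algebra where
   w^2 = r w - s.  A one-line block computation (dblmx_mul) shows that these
   matrices multiply like U + V w, for arbitrary U, V.  The paper's matrices
   are three nested doublings starting from scalars:
     A(x1..x4) = dblmx p q (B x1 x2) (B x3 x4),  B a b = dblmx m n a b,
     P(x1..x8) = dblmx r s A(x1..x4) A(x5..x8),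
   so P(x) is the regular representation of x in the commutative algebra
   R[w1] (x) R[w2] (x) R[w3] with w1^2 = m w1 - n, w2^2 = p w2 - q,
   w3^2 = r w3 - s.  Hence P(x) P(y) = P(x y) (Pmx_mul), where the product
   x y has structure constants equal to products of the structure constants
   of the three quadratic factors (oct_const).  These constants are integer
   polynomials in m, ..., s (coef_poly); the identity for z1 is the k = 0
   coordinate, and the determinant identity follows by multiplicativity. *)

Section Doubling.
Variables (R : comPzRingType) (r s : R).

Definition dblmx (n : nat) (U V : 'M[R]_n) : 'M[R]_(n + n) :=
  block_mx U V (- (s *: V)) (U + r *: V).

(* (U + V w)(U' + V' w) = (U U' - s V V') + (U V' + V U' + r V V') w;
   no commutation between the blocks is needed. *)
Lemma dblmx_mul n (U V U' V' : 'M[R]_n) :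
  dblmx U V *m dblmx U' V' =
  dblmx (U *m U' - s *: (V *m V')) (U *m V' + V *m U' + r *: (V *m V')).
Proof.
rewrite /dblmx mulmx_block !mulmxDl !mulmxDr !mulmxN !mulNmx.
rewrite -!scalemxAl -!scalemxAr !scalerDr !scalerA mulrC addrA; congr block_mx.
- by rewrite mulrC !opprD addrA (addrC (- (s *: (V *m U')))).
- by rewrite !addrA [- (s *: _) + _]addrC.
Qed.

Lemma dblmxD n (U V U' V' : 'M[R]_n) :
  dblmx U V + dblmx U' V' = dblmx (U + U') (V + V').
Proof. by rewrite /dblmx add_block_mx !scalerDr opprD addrACA. Qed.

Lemma dblmxZ n a (U V : 'M[R]_n) : a *: dblmx U V = dblmx (a *: U) (a *: V).
Proof.
by rewrite /dblmx scale_block_mx scalerDr !scalerN !scalerA (mulrC s) (mulrC r).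
Qed.

Lemma dblmxN n (U V : 'M[R]_n) : - dblmx U V = dblmx (- U) (- V).
Proof. by rewrite /dblmx opp_block_mx scalerN opprK opprD scalerN. Qed.

End Doubling.

(* The 2x2 matrix of multiplication by a + b w in R[w]/(w^2 - t w + u). *)
Definition quadmx (R : comPzRingType) (t u a b : R) : 'M[R]_2 :=
  dblmx t u (a%:M : 'M_1) b%:M.

Lemma Amx_dbl (R : comNzRingType) (m n p q x1 x2 x3 x4 : R) :
  Amx m n p q x1 x2 x3 x4 = dblmx p q (quadmx m n x1 x2) (quadmx m n x3 x4).
Proof.
apply/matrixP => i j; rewrite /quadmx /dblmx !mxE.
case: (@splitP 2 2 i) => i1 ->; rewrite !mxE; case: (@splitP 2 2 j) => j1 ->;
  rewrite !mxE; case: (@splitP 1 1 i1) => i2 ->; rewrite !mxE;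
  case: (@splitP 1 1 j1) => j2 ->; rewrite ?mxE (ord1 i2) (ord1 j2) /= !mulr1n.
all: ring.
Qed.

Lemma Pmx_dbl (R : comNzRingType) (m n p q r s : R) (x : 'I_8 -> R) :
  Pmx m n p q r s x =
  dblmx r s
    (dblmx p q (quadmx m n (x (ix 0)) (x (ix 1))) (quadmx m n (x (ix 2)) (x (ix 3))))
    (dblmx p q (quadmx m n (x (ix 4)) (x (ix 5))) (quadmx m n (x (ix 6)) (x (ix 7)))).
Proof. by rewrite /Pmx !Amx_dbl. Qed.

(* Coefficient of w^k in w^i w^j when w^2 = t w - u (exponents are bits). *)
Definition qconst (R : pzRingType) (t u : R) (k i j : bool) : R :=
  match i, j, k with
  | false, false, false | false, true, true | true, false, true => 1
  | true, true, false => - u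
  | true, true, true => t
  | _, _, _ => 0
  end.

Lemma rmorph_qconst (R S : pzRingType) (f : {rmorphism R -> S}) t u k i j :
  f (qconst t u k i j) = qconst (f t) (f u) k i j.
Proof. by case: i; case: j; case: k; rewrite /= ?rmorph0 ?rmorph1 ?rmorphN. Qed.

Definition bit (l k : nat) : bool := odd (iter l half k).

(* Structure constants of the tensor product of the three quadratic
   algebras, in the basis w1^b0 w2^b1 w3^b2 indexed by k = b0 + 2 b1 + 4 b2. *)
Definition oct_const (R : pzRingType) (m n p q r s : R) (k i j : nat) : R :=
  qconst m n (bit 0 k) (bit 0 i) (bit 0 j) * qconst p q (bit 1 k) (bit 1 i) (bit 1 j)
  * qconst r s (bit 2 k) (bit 2 i) (bit 2 j).

Lemma rmorph_oct_const (R S : pzRingType) (f : {rmorphism R -> S}) m n p q r s k i j :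
  f (oct_const m n p q r s k i j) =
  oct_const (f m) (f n) (f p) (f q) (f r) (f s) k i j.
Proof. by rewrite /oct_const !rmorphM !rmorph_qconst. Qed.

Definition oct_mul (R : comNzRingType) (m n p q r s : R) (x y : 'I_8 -> R)
    (k : 'I_8) : R :=
  \sum_(i < 8) \sum_(j < 8) oct_const m n p q r s k i j * x i * y j.

Lemma ixK k : (k < 8)%N -> nat_of_ord (ix k) = k.
Proof. exact: inordK. Qed.

Lemma sum8 (R : comNzRingType) (F : 'I_8 -> R) :
  \sum_(i < 8) F i = F (ix 0) + F (ix 1) + F (ix 2) + F (ix 3) + F (ix 4)
     + F (ix 5) + F (ix 6) + F (ix 7).
Proof.
rewrite !big_ord_recl big_ord0 addr0 /= !addrA.
by repeat congr (_ + _); congr F; apply/val_inj; rewrite /= ixK.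
Qed.

(* Expanding with dblmx_mul at the
   three levels and pushing the linear combinations into the 1x1 leaves
   leaves eight scalar identities, one per coordinate.  The rewriting uses
   Coq's rewrite: ssreflect's matching compares the many similar products
   up to conversion, which is prohibitively slow here. *)
Lemma Pmx_mul (R : comNzRingType) (m n p q r s : R) (x y : 'I_8 -> R) :
  Pmx m n p q r s x *m Pmx m n p q r s y = Pmx m n p q r s (oct_mul m n p q r s x y).
Proof.
rewrite !Pmx_dbl /quadmx.
erewrite (@dblmx_mul R r s 4), !(@dblmx_mul R p q 2), !(@dblmx_mul R m n 1).
erewrite <- !scalar_mxM, !(@dblmxZ R m n 1), !(@dblmxN R m n 1), !(@dblmxD R m n 1).
erewrite !(@dblmxZ R p q 2), !(@dblmxN R p q 2), !(@dblmxD R p q 2).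
erewrite !(@dblmxZ R m n 1), !(@dblmxN R m n 1), !(@dblmxD R m n 1).
apply: (congr2 (@dblmx R r s 4)); apply: (congr2 (@dblmx R p q 2));
  apply: (congr2 (@dblmx R m n 1)).
all: do ![rewrite scale_scalar_mx | rewrite -(raddfN (@scalar_mx R 1))
        | rewrite -(raddfD (@scalar_mx R 1))].
all: congr (_%:M); rewrite /oct_mul !sum8 /oct_const !ixK //=; ring.
Qed.

Lemma eq_Pmx (R : comNzRingType) (m n p q r s : R) (x y : 'I_8 -> R) :
  x =1 y -> Pmx m n p q r s x = Pmx m n p q r s y.
Proof. by move=> exy; rewrite /Pmx !exy. Qed.

(* The structure constants as integer polynomials in the parameters
   X_0, ..., X_5 standing for m, n, p, q, r, s. *)
Definition param_poly (i : nat) : {mpoly int[6]} := 'X_(inord i).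

Definition coef_poly (k i j : 'I_8) : {mpoly int[6]} :=
  oct_const (param_poly 0) (param_poly 1) (param_poly 2) (param_poly 3)
    (param_poly 4) (param_poly 5) k i j.

(* Evaluation and the cast from int are ring morphisms, so they commute
   with the structure constants. *)
Lemma eval_coef_poly (R : comNzRingType) (m n p q r s : int) (k i j : 'I_8) :
  ((coef_poly k i j).@[params m n p q r s])%:~R =
  oct_const (m%:~R : R) n%:~R p%:~R q%:~R r%:~R s%:~R k i j.
Proof.
by rewrite /coef_poly !rmorph_oct_const /= /param_poly !mevalXU /params !inordK.
Qed.

Lemma bilin_coef_poly (R : comNzRingType) (m n p q r s : int) (x y : 'I_8 -> R) k :
  bilin (coef_poly k) m n p q r s x y =
  oct_mul m%:~R n%:~R p%:~R q%:~R r%:~R s%:~R x y k.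
Proof.
by apply: eq_bigr => i _; apply: eq_bigr => j _; rewrite eval_coef_poly.
Qed.

Theorem mainTheorem10 :
  exists c : 'I_8 -> 'I_8 -> 'I_8 -> {mpoly int[6]},
  forall (m n p q r s : int) (R : comRingType) (x y : 'I_8 -> R),
    let z : 'I_8 -> R := fun k => bilin (c k) m n p q r s x y in
    let M := m%:~R : R in let N := n%:~R : R in let Pp := p%:~R : R in
    let Q := q%:~R : R in let Rr := r%:~R : R in let S := s%:~R : R in
    [/\ Pmx M N Pp Q Rr S x *m Pmx M N Pp Q Rr S y = Pmx M N Pp Q Rr S z,
        z (ix 0) = x (ix 0) * y (ix 0) - N * x (ix 1) * y (ix 1) - Q * x (ix 2) * y (ix 2)
                 + Q * N * x (ix 3) * y (ix 3) - S * x (ix 4) * y (ix 4)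
                 + S * N * x (ix 5) * y (ix 5) + S * Q * x (ix 6) * y (ix 6)
                 - S * Q * N * x (ix 7) * y (ix 7)
      & fform M N Pp Q Rr S x * fform M N Pp Q Rr S y = fform M N Pp Q Rr S z].
Proof.
exists coef_poly => m n p q r s R x y z M N Pp Q Rr S.
have zE : z =1 oct_mul M N Pp Q Rr S x y by move=> k; exact: bilin_coef_poly.
have mulP : Pmx M N Pp Q Rr S x *m Pmx M N Pp Q Rr S y = Pmx M N Pp Q Rr S z.
  by rewrite Pmx_mul (eq_Pmx M N Pp Q Rr S zE).
split=> //.
- by rewrite zE /oct_mul !sum8 /oct_const !ixK //=; ring.
- by rewrite /fform -det_mulmx mulP.
Qed.
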